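(* Let $G$ be the free group on the generators $\vec{s}=(s_n)_{n\in\omega}$ and $S\subseteq G$ the free semigroup on the same generators. Let $p$ be a very strongly productive ultrafilter on $S$ (regarded as an ultrafilter on $G$). If $q,r\in\beta G$ satisfy $qr=p$, then there is $w\in G$ such that one of the following holds: (1) $r=wp$ and $q=pw^{-1}$; (2) $r=w$ and $q=pw^{-1}$; (3) $r=wp$ and $q=w^{-1}$. In particular, if $q,r\in G^*$ and $qr=p$, then $r=wp$ and $q=pw^{-1}$ for some $w\in G$.
   Context: $\beta G$ is the set of ultrafilters on $G$, with elements of $G$ identified with principal ultrafilters and $G^*=\beta G\setminus G$ the nonprincipal ones. The product in $\beta G$ is defined by $A\in qr$ iff $\{x\in G: x^{-1}A\in r\}\in q$, where $x^{-1}A=\{y: xy\in A\}$; thus e.g. $wp=\{A: w^{-1}A\in p\}$ and $pw^{-1}=\{A: Aw\in p\}$. For a sequence $\vec{x}$ in $S$, $\mathrm{FP}(\vec{x})$ is the set of products $\prod_{i\in a}x_i$ (increasing order of indices), $a$ a finite nonempty subset of $\omega$. A sequence $\vec{y}$ is a product subsystem of $\vec{x}$ if there are finite nonempty $a_n\subseteq\omega$ with $\max a_n<\min a_{n+1}$ and $y_n=\prod_{i\in a_n}x_i$. An ultrafilter $p$ on $S$ is very strongly productive if every $A\in p$ contains some $\mathrm{FP}(\vec{x})\in p$ with $\vec{x}$ a product subsystem of $\vec{s}$. *)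

From mathcomp Require Import all_boot.
Set Implicit Arguments. Unset Strict Implicit. Unset Printing Implicit Defensive.

(* A letter (n, true) is s_n, a letter (n, false) is s_n^{-1}. *)
Definition letter := (nat * bool)%type.

Definition cancels (x y : letter) : bool := (x.1 == y.1) && (x.2 != y.2).

Fixpoint reduce (w : seq letter) : seq letter :=
  match w with
  | [::] => [::]
  | x :: t =>
      match reduce t with
      | [::] => [:: x]
      | y :: t' => if cancels x y then t' else x :: y :: t'
      end
  end.

Fixpoint isred (w : seq letter) : bool :=
  match w with
  | x :: ((y :: _) as t) => ~~ cancels x y && isred t
  | _ => true
  end.

Lemma isred_cons x t : isred (x :: t) -> isred t.
Proof. by case: t => [|y t] //= /andP[]. Qed.

Lemma isred_reduce w : isred (reduce w).
Proof.
elim: w => [|x t IH] //=.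
case E: (reduce t) => [|y t'] //=; rewrite E in IH.
case: ifP => [_|hc]; first exact: (isred_cons IH).
by rewrite /= hc /=.
Qed.

(* reduced words = elements of the free group *)
Definition FG := {w : seq letter | isred w}.

Definition fg_of (w : seq letter) : FG := exist _ (reduce w) (isred_reduce w).

Definition fg_one : FG := exist (fun w => isred w) [::] isT.
Definition fg_mul (a b : FG) : FG := fg_of (proj1_sig a ++ proj1_sig b).
Definition fg_inv (a : FG) : FG :=
  fg_of (rev (map (fun x : letter => (x.1, ~~ x.2)) (proj1_sig a))).

Definition gen (n : nat) : FG := fg_of [:: (n, true)].

(* the free semigroup S generated by the s_n: nonempty positive words *)
Definition inS (g : FG) : Prop :=
  proj1_sig g <> [::] /\ all (fun x : letter => x.2) (proj1_sig g).

Definition set_ (T : Type) := T -> Prop.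

Definition ultrafilter (U : set_ FG -> Prop) : Prop :=
  [/\ U (fun _ => True),
      ~ U (fun _ => False),
      (forall A B : set_ FG, U A -> (forall x, A x -> B x) -> U B),
      (forall A B : set_ FG, U A -> U B -> U (fun x => A x /\ B x))
    & (forall A : set_ FG, U A \/ U (fun x => ~ A x))].

(* principal ultrafilter at w (identification of G inside beta G) *)
Definition principal (w : FG) : set_ FG -> Prop := fun A => A w.

Definition nonprincipal (U : set_ FG -> Prop) : Prop :=
  forall w : FG, ~ (forall A, U A <-> principal w A).

Definition ltrans (x : FG) (A : set_ FG) : set_ FG := fun y => A (fg_mul x y).

Definition uf_mul (q r : set_ FG -> Prop) : set_ FG -> Prop :=
  fun A => q (fun x => r (ltrans x A)).

Definition uf_eq (U V : set_ FG -> Prop) : Prop := forall A, U A <-> V A.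

(* finite nonempty index sets, listed in increasing order *)
Definition fin_index (a : seq nat) : Prop := a <> [::] /\ sorted ltn a.

Definition seq_prod (x : nat -> FG) (a : seq nat) : FG :=
  foldr (fun i acc => fg_mul (x i) acc) fg_one a.

Definition FP (x : nat -> FG) : set_ FG :=
  fun g => exists a, fin_index a /\ g = seq_prod x a.

Definition product_subsystem (y x : nat -> FG) : Prop :=
  exists a : nat -> seq nat,
    (forall n, fin_index (a n)) /\
    (forall n, last 0 (a n) < head 0 (a n.+1)) /\
    (forall n, y n = seq_prod x (a n)).

(* p (an ultrafilter on G containing S, i.e. an ultrafilter on S) is very
   strongly productive w.r.t. the generating sequence gen *)
Definition very_strongly_productive (p : set_ FG -> Prop) : Prop :=
  forall A : set_ FG, p A ->
    exists x : nat -> FG, product_subsystem x gen /\ p (FP x) /\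
      (forall g, FP x g -> A g).

From mathcomp Require Import all_boot.
From Stdlib Require Import Classical.
Set Implicit Arguments. Unset Strict Implicit. Unset Printing Implicit Defensive.

(* From very strong productivity
   we get: p contains the words with increasing indices, p contains no set
   of "interval traces", and if c <> 1 with c^-1 FP(x) in p then c is in
   FP(x), so that q p = p forces q = 1 or q = p (left_stabilizer).
   The core lemma (right_factor_translate) treats q r = p with r nonprincipal
   and containing the increasing words: the indices carried by r-almost every
   element form a finite set (r_index_bounded), and r = w p where w is the
   increasing word of these indices.  A general nonprincipal r is reduced to
   this case by translating away the letters of an element of q that cancel
   (uf_cancellation); once r = w p, left_stabilizer applied to (q w) p = p
   determines q, and a principal r = w directly gives q = p w^-1. *)

Definition word (g : FG) : seq letter := proj1_sig g.

Lemma word_inj (a b : FG) : word a = word b -> a = b.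
Proof.
case: a b => [a Ha] [b Hb] /= E; rewrite /word /= in E; subst b.
by rewrite (bool_irrelevance Ha Hb).
Qed.

Definition push (x : letter) (s : seq letter) : seq letter :=
  match s with
  | [::] => [:: x]
  | y :: s' => if cancels x y then s' else x :: y :: s'
  end.

Lemma isred_push x s : isred s -> isred (push x s).
Proof.
case: s => [|y s] //= H; case: ifP => hc; first exact: (isred_cons H).
by rewrite /= hc.
Qed.

Lemma reduce_id w : isred w -> reduce w = w.
Proof.
elim: w => [|x t IH] // H; rewrite /= IH; last exact: (isred_cons H).
by case: t H {IH} => [|y t] //= /andP[hc _]; rewrite (negbTE hc).
Qed.

Lemma reduce_cat a b : reduce (a ++ b) = foldr push (reduce b) a.
Proof. by elim: a => [|x a IH] //=; rewrite -IH. Qed.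

Lemma isred_foldr s l : isred s -> isred (foldr push s l).
Proof. by move=> H; elim: l => [|x l IH] //=; apply: isred_push. Qed.

Lemma cancels_inv x y z : cancels x y -> cancels y z -> z = x.
Proof.
case: x y z => [i b] [j c] [k d].
rewrite /cancels /= => /andP[/eqP-> h1] /andP[/eqP-> h2].
by case: b c d h1 h2 => [] [] [].
Qed.

Lemma push_push x y u : cancels x y -> isred u -> push x (push y u) = u.
Proof.
move=> cxy; case: u => [|z u] /=; first by rewrite cxy.
move=> H; case: ifP => cyz; last by rewrite /= ?cxy.
move: H; rewrite (cancels_inv cxy cyz); case: u => [|z' u] //= /andP[h _].
by rewrite (negbTE h).
Qed.

Lemma foldr_push_push s r x : isred r -> isred s ->
  foldr push s (push x r) = push x (foldr push s r).
Proof.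
case: r => [|y r] //= Hr Hs; case: ifP => // cxy.
by rewrite push_push //; apply: isred_foldr.
Qed.

Lemma foldr_reduce s a : isred s -> foldr push s (reduce a) = foldr push s a.
Proof.
move=> Hs; elim: a => [|x a IH] //=.
by rewrite foldr_push_push ?IH //; exact: isred_reduce.
Qed.

Lemma reduce_catr a b : reduce (a ++ reduce b) = reduce (a ++ b).
Proof. by rewrite !reduce_cat reduce_id // isred_reduce. Qed.

Lemma reduce_catl a b : reduce (reduce a ++ b) = reduce (a ++ b).
Proof. by rewrite !reduce_cat foldr_reduce // isred_reduce. Qed.

Lemma fg_mulA a b c : fg_mul (fg_mul a b) c = fg_mul a (fg_mul b c).
Proof. by apply: word_inj; rewrite /word /= reduce_catl reduce_catr catA. Qed.

Lemma fg_mul1g a : fg_mul fg_one a = a.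
Proof. by apply: word_inj; rewrite /word /= reduce_id //; case: a. Qed.

Lemma fg_mulg1 a : fg_mul a fg_one = a.
Proof. by apply: word_inj; rewrite /word /= cats0 reduce_id //; case: a. Qed.

Definition flip (x : letter) : letter := (x.1, ~~ x.2).
Definition winv (w : seq letter) : seq letter := rev (map flip w).

Lemma winv_cons x w : winv (x :: w) = winv w ++ [:: flip x].
Proof. by rewrite /winv /= rev_cons cats1. Qed.

Lemma winvK w : winv (winv w) = w.
Proof.
rewrite /winv map_rev revK -map_comp map_id_in // => x _.
by case: x => i b /=; rewrite /flip /= negbK.
Qed.

Lemma cancels_flip x : cancels x (flip x).
Proof. by case: x => i b; rewrite /cancels /= eqxx; case: b. Qed.

Lemma cancels_eq_flip x z : cancels x z -> z = flip x.
Proof.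
case: x z => [i b] [j c]; rewrite /cancels /flip /= => /andP[/eqP-> h].
by case: b c h => [] [].
Qed.

Lemma reduce_winv a : reduce (a ++ winv a) = [::].
Proof.
have cancel_all s : isred s -> foldr push s (a ++ winv a) = s.
  elim: a s => [|x a IH] s Hs //=.
  rewrite winv_cons catA foldr_cat /= IH; last exact: isred_push.
  by rewrite push_push // cancels_flip.
by rewrite -[a ++ winv a]cats0 reduce_cat cancel_all.
Qed.

Lemma fg_mulV a : fg_mul a (fg_inv a) = fg_one.
Proof. by apply: word_inj; rewrite /word /= reduce_catr; exact: reduce_winv. Qed.

Lemma fg_mulVg a : fg_mul (fg_inv a) a = fg_one.
Proof.
apply: word_inj; rewrite /word /= reduce_catl.
by have := reduce_winv (winv (proj1_sig a)); rewrite winvK.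
Qed.

Lemma fg_mulK c y : fg_mul (fg_inv c) (fg_mul c y) = y.
Proof. by rewrite -fg_mulA fg_mulVg fg_mul1g. Qed.

Lemma fg_mulgK x c : fg_mul (fg_mul x c) (fg_inv c) = x.
Proof. by rewrite fg_mulA fg_mulV fg_mulg1. Qed.

Lemma reduced_product_split a t : isred a -> isred t ->
  exists u v t2, [/\ a = u ++ v, t = winv v ++ t2 & reduce (a ++ t) = u ++ t2].
Proof.
move=> Ha Ht; rewrite reduce_cat (reduce_id Ht).
elim: a Ha => [|x a IH] Ha; first by exists [::], [::], t.
have [u [v [t2 [E1 E2 E3]]]] := IH (isred_cons Ha).
rewrite /= E3; subst a; clear IH.
case: u Ha E3 => [|y u] Ha E3; last first.
  have nc : cancels x y = false by move: Ha; rewrite /= => /andP[/negbTE].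
  by exists [:: x, y & u], v, t2; rewrite /= nc.
case: t2 E2 E3 => [|z t3] E2 E3; first by exists [:: x], v, [::].
rewrite /=; case: ifP => cxz; last by exists [:: x], v, (z :: t3).
exists [::], (x :: v), t3; split => //.
by rewrite E2 winv_cons -catA (cancels_eq_flip cxz).
Qed.

Definition pos (i : nat) : letter := (i, true).

Definition idx (g : FG) : seq nat := map fst (word g).

Lemma positive_isred w : all snd w -> isred w.
Proof.
elim: w => [|x t IH] //= /andP[hx ht].
case: t IH ht => [|y t] // IH ht.
rewrite IH // andbT /cancels; move: ht => /= /andP[hy _]; by rewrite hx hy andbF.
Qed.

Lemma positive_word w : all snd w -> w = map pos (map fst w).
Proof. by elim: w => [|[i b] w IH] //= /andP[/= -> hw]; rewrite -IH. Qed.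

Lemma all_snd_pos s : all snd (map pos s).
Proof. by elim: s. Qed.

Lemma map_fst_pos s : map fst (map pos s) = s.
Proof. by elim: s => //= i s ->. Qed.

Lemma pos_inj : injective pos.
Proof. by move=> i j []. Qed.

Lemma word_mul_pos (u v : FG) : all snd (word u) -> all snd (word v) ->
  word (fg_mul u v) = word u ++ word v.
Proof.
move=> hu hv; rewrite /fg_mul /fg_of /word /= reduce_id //.
by apply: positive_isred; rewrite all_cat hu hv.
Qed.

Lemma word_seq_prod (x : nat -> FG) b : (forall n, all snd (word (x n))) ->
  word (seq_prod x b) = flatten (map (fun n => word (x n)) b).
Proof.
move=> hx; elim: b => [|n b IH] //.
rewrite [seq_prod _ _]/= word_mul_pos // IH; elim: (b) => //= m b' IHb; by rewrite all_cat hx IHb.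
Qed.

Lemma word_seq_prod_gen s : word (seq_prod gen s) = map pos s.
Proof. by rewrite word_seq_prod //; elim: s => //= i s ->. Qed.

Lemma word_blocks (x : nat -> FG) (a : nat -> seq nat) b :
  (forall n, x n = seq_prod gen (a n)) ->
  word (seq_prod x b) = map pos (flatten (map a b)).
Proof.
move=> hx; rewrite word_seq_prod => [|n]; last by rewrite hx word_seq_prod_gen all_snd_pos.
by elim: b => //= n b ->; rewrite hx word_seq_prod_gen map_cat.
Qed.

Lemma reduce_cat_disjoint u v : isred u -> isred v ->
  (forall x y, x \in u -> y \in v -> x.1 <> y.1) -> reduce (u ++ v) = u ++ v.
Proof.
move=> hu hv hd; have [u' [v0 [t2 [E1 E2 ->]]]] := reduced_product_split hu hv.
case: v0 E1 E2 => [|x v0] E1 E2; first by rewrite E1 E2 cats0.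
exfalso; apply: (hd x (flip x)) => //; first by rewrite E1 mem_cat mem_head orbT.
by rewrite E2 mem_cat /winv mem_rev map_f ?mem_head.
Qed.

(* The sum of a list bounds its entries: a crude bound on the indices of a word. *)
Lemma leq_sumn_mem (s : seq nat) i : i \in s -> i <= sumn s.
Proof.
elim: s => [|x s IH] //=; rewrite inE => /orP[/eqP->|/IH h]; first exact: leq_addr.
exact: leq_trans h (leq_addl _ _).
Qed.

Lemma sorted_bounds s i : sorted ltn s -> i \in s -> head 0 s <= i <= last 0 s.
Proof.
case: s => [|x s] //= hp hi; apply/andP; split.
  move: hi; rewrite inE => /orP[/eqP->|hi] //.
  by apply: ltnW; have := order_path_min ltn_trans hp => /allP /(_ _ hi).
elim: s x i hp hi => [|y s IH] x i /=; first by rewrite inE => _ /eqP->.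
case/andP=> hxy hp; rewrite inE => /orP[/eqP->|]; last exact: IH.
exact: leq_trans (ltnW hxy) (IH _ _ hp (mem_head _ _)).
Qed.

Section Blocks.
Variable a : nat -> seq nat.
Hypothesis Hfin : forall n, fin_index (a n).
Hypothesis Hlt : forall n, last 0 (a n) < head 0 (a n.+1).

Lemma bl_bounds n i : i \in a n -> head 0 (a n) <= i <= last 0 (a n).
Proof. by apply: sorted_bounds; case: (Hfin n). Qed.

Lemma bl_head_mem n : head 0 (a n) \in a n.
Proof. by case: (Hfin n); case: (a n) => // x s _ _; rewrite mem_head. Qed.

Lemma bl_hl n : head 0 (a n) <= last 0 (a n).
Proof. by case/andP: (bl_bounds (bl_head_mem n)). Qed.

Lemma bl_lt m n : m < n -> last 0 (a m) < head 0 (a n).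
Proof.
elim: n => [|n IH] //; rewrite ltnS leq_eqVlt => /orP[/eqP->|h]; first exact: Hlt.
by apply: ltn_trans (IH h) (leq_ltn_trans (bl_hl n) (Hlt n)).
Qed.

Lemma bl_head_ge n : n <= head 0 (a n).
Proof.
elim: n => [|n IH] //; apply: leq_ltn_trans (Hlt n).
exact: leq_trans IH (bl_hl n).
Qed.

Lemma bl_last_ge n : n <= last 0 (a n).
Proof. exact: leq_trans (bl_head_ge n) (bl_hl n). Qed.

Lemma bl_last_mono m n : m <= n -> last 0 (a m) <= last 0 (a n).
Proof.
rewrite leq_eqVlt => /orP[/eqP->|h] //.
by apply: ltnW; apply: leq_trans (bl_lt h) (bl_hl n).
Qed.

Lemma bl_window_uniq m n i : i \in a m ->
  head 0 (a n) <= i <= last 0 (a n) -> m = n.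
Proof.
move=> hm /andP[h1 h2]; case/andP: (bl_bounds hm) => h3 h4.
case: (ltngtP m n) => // h.
  by have := leq_ltn_trans h4 (leq_trans (bl_lt h) h1); rewrite ltnn.
by have := leq_ltn_trans h2 (leq_trans (bl_lt h) h3); rewrite ltnn.
Qed.

Lemma bl_window n bs i : head 0 (a n) <= i <= last 0 (a n) ->
  (i \in flatten (map a bs)) = (n \in bs) && (i \in a n).
Proof.
move=> hw; apply/flatten_mapP/andP => [[m hm him]|[hn hi]]; last by exists n.
by rewrite -(bl_window_uniq him hw).
Qed.

Lemma bl_filter_gt N b :
  [seq i <- flatten (map a b) | last 0 (a N) < i] =
  flatten (map a [seq n <- b | N < n]).
Proof.
elim: b => [|m b IH] //=; rewrite filter_cat IH; case: ifP => hm /=.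
  congr (_ ++ _); apply/all_filterP/allP => i /bl_bounds /andP[h _].
  exact: leq_trans (bl_lt hm) h.
rewrite (_ : [seq i <- a m | last 0 (a N) < i] = [::]) //.
apply/eqP; apply: negbNE; rewrite -has_filter; apply/hasPn => i /bl_bounds /andP[_ h].
by rewrite -leqNgt; apply: leq_trans h (bl_last_mono _); rewrite leqNgt hm.
Qed.

Lemma bl_filter_le N b :
  [seq i <- flatten (map a b) | i <= last 0 (a N)] =
  flatten (map a [seq n <- b | n <= N]).
Proof.
elim: b => [|m b IH] //=; rewrite filter_cat IH; case: ifP => hm /=.
  congr (_ ++ _); apply/all_filterP/allP => i /bl_bounds /andP[_ h].
  exact: leq_trans h (bl_last_mono hm).
rewrite (_ : [seq i <- a m | i <= last 0 (a N)] = [::]) //.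
apply/eqP; apply: negbNE; rewrite -has_filter; apply/hasPn => i /bl_bounds /andP[h _].
by rewrite -ltnNge; apply: leq_trans (bl_lt _) h; rewrite ltnNge hm.
Qed.

Lemma bl_split N b s s' : s ++ s' = flatten (map a b) ->
  (forall i, i \in s -> i <= last 0 (a N)) -> (forall i, i \in s' -> last 0 (a N) < i) ->
  s = flatten (map a [seq n <- b | n <= N]) /\ s' = flatten (map a [seq n <- b | N < n]).
Proof.
move=> E hs hs'; rewrite -bl_filter_le -bl_filter_gt -E !filter_cat.
have none (t : seq nat) (P : pred nat) : (forall i, i \in t -> ~~ P i) -> filter P t = [::].
  by move=> ht; apply/eqP; rewrite -(negbK (_ == _)) -has_filter; apply/hasPn.
rewrite (none s' (fun i => i <= last 0 (a N))) => [|i /hs']; last by rewrite /= -ltnNge.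
rewrite (none s (fun i => last 0 (a N) < i)) => [|i /hs]; last by rewrite /= -leqNgt.
rewrite cats0; split; apply/esym/all_filterP/allP; [exact: hs | exact: hs'].
Qed.

Lemma bl_flatten_sorted b : sorted ltn b -> sorted ltn (flatten (map a b)).
Proof.
elim: b => [|n b IH] //= hp; rewrite sorted_pairwise; last exact: ltn_trans.
rewrite pairwise_cat -!sorted_pairwise; try exact: ltn_trans.
rewrite IH ?(path_sorted hp) // andbT; apply/andP; split; last by case: (Hfin n).
apply/allrelP => i j hi /flatten_mapP [m hm hj].
have hnm : n < m by have := order_path_min ltn_trans hp => /allP /(_ _ hm).
case/andP: (bl_bounds hi) => _ h1; case/andP: (bl_bounds hj) => h2 _.
exact: leq_ltn_trans h1 (leq_trans (bl_lt hnm) h2).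
Qed.

End Blocks.

Section Ultrafilter.
Variable U : set_ FG -> Prop.
Hypothesis HU : ultrafilter U.

Lemma uf_T : U (fun _ => True).
Proof. by case: HU. Qed.

Lemma uf_up (A B : set_ FG) : U A -> (forall x, A x -> B x) -> U B.
Proof. by case: HU => _ _ h _ _; apply: h. Qed.

Lemma uf_and (A B : set_ FG) : U A -> U B -> U (fun x => A x /\ B x).
Proof. by case: HU => _ _ _ h _; apply: h. Qed.

Lemma uf_dich (A : set_ FG) : U A \/ U (fun x => ~ A x).
Proof. by case: HU. Qed.

Lemma uf_ne (A : set_ FG) : U A -> exists x, A x.
Proof.
move=> hA; apply: NNPP => hn; case: HU => _ hF _ _ _; apply: hF.
by apply: (uf_up hA) => x ax; apply: hn; exists x.
Qed.

Lemma uf_not (A : set_ FG) : ~ U A -> U (fun x => ~ A x).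
Proof. by case: (uf_dich A). Qed.

Lemma uf_notboth (A : set_ FG) : U A -> U (fun x => ~ A x) -> False.
Proof. by move=> h1 h2; have [x []] := uf_ne (uf_and h1 h2). Qed.

Lemma uf_iff (A B : set_ FG) : (forall x, A x <-> B x) -> (U A <-> U B).
Proof. by move=> h; split=> hh; apply: (uf_up hh) => x /h. Qed.

Lemma uf_principal_of w : U (fun x => x = w) -> uf_eq U (principal w).
Proof.
move=> hw A; split=> hA; last by apply: (uf_up hw) => x ->.
by have [x [ax <-]] := uf_ne (uf_and hA hw).
Qed.

Lemma uf_nonprinc w : nonprincipal U -> U (fun x => x <> w).
Proof.
move=> hn; case: (uf_dich (fun x => x <> w)) => // h; exfalso; apply: (hn w).
by apply: uf_principal_of; apply: (uf_up h) => x /NNPP.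
Qed.

Lemma uf_fin (P : set_ FG) (Q : nat -> set_ FG) N :
  U P -> (forall x, P x -> exists k, k <= N /\ Q k x) ->
  exists k, k <= N /\ U (Q k).
Proof.
elim: N P => [|N IH] P hP hQ.
  exists 0; split => //; apply: (uf_up hP) => x /hQ [k [hk hq]].
  by move: hk; rewrite leqn0 => /eqP <-.
case: (uf_dich (Q N.+1)) => h; first by exists N.+1.
have [|k [hk hq]] := IH _ (uf_and hP h); last by exists k; split => //; apply: leqW.
move=> x [px nq]; have [k [hk qk]] := hQ x px.
exists k; split => //; move: hk; rewrite leq_eqVlt => /orP[/eqP ek|] //.
by rewrite ek in qk.
Qed.

End Ultrafilter.

Lemma not_nonprincipal U : ~ nonprincipal U -> exists w, uf_eq U (principal w).
Proof. by move=> h; apply: NNPP => hn; apply: h => w hw; apply: hn; exists w. Qed.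

Lemma uf_eq_of_sub (U V : set_ FG -> Prop) : ultrafilter U ->
  (forall A, V A \/ V (fun x => ~ A x)) -> (forall A, V A -> U A) -> uf_eq U V.
Proof.
move=> hU hV hs A; split; last exact: hs.
by move=> hA; case: (hV A) => // /hs h; case: (uf_notboth hU hA h).
Qed.

Lemma uf_img (U : set_ FG -> Prop) (h : FG -> FG) : ultrafilter U ->
  ultrafilter (fun A => U (fun x => A (h x))).
Proof.
case=> h1 h2 h3 h4 h5; split => //.
  by move=> A B hA hAB; apply: (h3 _ _ hA) => x; apply: hAB.
by move=> A B; exact: (h4 (fun x => A (h x)) (fun x => B (h x))).
Qed.

Lemma uf_mul_principal_l U c : ultrafilter U -> ultrafilter (uf_mul (principal c) U).
Proof. exact: (uf_img (fg_mul c)). Qed.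

Lemma uf_mul_principal_r U c : ultrafilter U -> ultrafilter (uf_mul U (principal c)).
Proof. exact: (uf_img (fg_mul^~ c)). Qed.

Definition increasing_positive (g : FG) : Prop :=
  all snd (word g) /\ sorted ltn (idx g).

Definition interval_trace (C : nat -> Prop) (g : FG) : Prop :=
  exists s, word g = map pos s /\
    forall i, head 0 s <= i -> i <= last 0 s -> (i \in s <-> C i).

Lemma FP_blocks x a : (forall n, x n = seq_prod gen (a n)) -> forall g, FP x g ->
  exists b, fin_index b /\ word g = map pos (flatten (map a b)).
Proof. by move=> hx g [b [hb ->]]; exists b; split => //; rewrite (word_blocks _ hx). Qed.

Section VeryStronglyProductive.
Variable p : set_ FG -> Prop.
Hypothesis Hp : ultrafilter p.
Hypothesis Hv : very_strongly_productive p.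

Lemma vsp_blocks A : p A -> exists x a,
  [/\ (forall n, fin_index (a n)), (forall n, last 0 (a n) < head 0 (a n.+1)),
      (forall n, x n = seq_prod gen (a n)), p (FP x) & (forall g, FP x g -> A g)].
Proof. by move=> /Hv [x [[a [h1 [h2 h3]]] [h4 h5]]]; exists x, a. Qed.

Lemma p_indices_above K : p (fun g => forall i, i \in idx g -> K < i).
Proof.
apply: NNPP => /(uf_not Hp) /vsp_blocks [x [a [h1 h2 h3 _ h5]]].
apply: (h5 (seq_prod x [:: K.+1])); first by exists [:: K.+1].
move=> i; rewrite /idx (word_blocks _ h3) /= cats0 map_fst_pos => /(bl_bounds h1).
by case/andP => hh _; exact: leq_trans (bl_head_ge h1 h2 K.+1) hh.
Qed.

Lemma p_increasing : p increasing_positive.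
Proof.
have [x [a [h1 h2 h3 h4 _]]] := vsp_blocks (uf_T Hp).
apply: (uf_up Hp h4) => g [b [[_ hb] ->]].
rewrite /increasing_positive /idx (word_blocks _ h3) map_fst_pos all_snd_pos.
by split => //; exact: bl_flatten_sorted.
Qed.

(* No set of interval traces belongs to p: the products x_0 x_2 and x_1 of an
   FP-set would have to disagree about the first index of the block a 1. *)
Lemma p_no_interval_trace C : ~ p (interval_trace C).
Proof.
move=> /vsp_blocks [x [a [h1 h2 h3 _ h5]]].
have [s02 [E02 G02]] : interval_trace C (seq_prod x [:: 0; 2]) by apply: h5; exists [:: 0; 2].
have [s1 [E1 G1]] : interval_trace C (seq_prod x [:: 1]) by apply: h5; exists [:: 1].
rewrite (word_blocks _ h3) /= cats0 in E02; rewrite (word_blocks _ h3) /= cats0 in E1.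
have {}E02 := inj_map pos_inj E02; have {}E1 := inj_map pos_inj E1; subst s02 s1.
set i := head 0 (a 1).
have hi : i \in a 1 := bl_head_mem h1 1.
have [hi1 hi2] : head 0 (a 1) <= i /\ i <= last 0 (a 1) by case/andP: (bl_bounds h1 hi).
have not02 : i \notin a 0 ++ a 2.
  by rewrite mem_cat; apply/negP => /orP[] /(bl_window_uniq h1 h2)/(_ (bl_bounds h1 hi)).
case/negP: not02; apply/(G02 i); last exact/(G1 _ hi1 hi2).
  case: (h1 0) => ne0 _; rewrite (_ : head 0 _ = head 0 (a 0)); last by case: (a 0) ne0.
  exact: ltnW (leq_ltn_trans (bl_hl h1 0) (bl_lt h1 h2 (m := 0) (n := 1) isT)).
case: (h1 2) => ne2 _; rewrite last_cat (_ : last _ (a 2) = last 0 (a 2)); last by case: (a 2) ne2.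
apply: leq_trans (bl_hl h1 2); apply: ltnW; apply: leq_ltn_trans hi2 _.
exact: (bl_lt h1 h2 (m := 1) (n := 2)).
Qed.

Lemma block_word_prefix x a N b (c z : FG) :
  (forall n, fin_index (a n)) -> (forall n, last 0 (a n) < head 0 (a n.+1)) ->
  (forall n, x n = seq_prod gen (a n)) ->
  word c ++ word z = map pos (flatten (map a b)) ->
  (forall i, i \in idx c -> i <= last 0 (a N)) ->
  (forall i, i \in idx z -> last 0 (a N) < i) ->
  c = seq_prod x [seq n <- b | n <= N].
Proof.
move=> h1 h2 h3 E hc hz.
have hpos : all snd (word c).
  by have := all_snd_pos (flatten (map a b)); rewrite -E all_cat => /andP[].
have E' : idx c ++ idx z = flatten (map a b) by rewrite /idx -map_cat E map_fst_pos.
apply: word_inj; rewrite (word_blocks _ h3) (positive_word hpos).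
by rewrite -/(idx c) (bl_split h1 h2 E' hc hz).1.
Qed.

Lemma FP_of_translate x a : (forall n, fin_index (a n)) ->
  (forall n, last 0 (a n) < head 0 (a n.+1)) ->
  (forall n, x n = seq_prod gen (a n)) ->
  forall c, c <> fg_one -> p (ltrans c (FP x)) -> FP x c.
Proof.
move=> h1 h2 h3 c hc hp.
set M := sumn (idx c); set K := last 0 (a M).
have hcK : forall i, i \in idx c -> i <= K.
  by move=> i /leq_sumn_mem hi; exact: leq_trans hi (bl_last_ge h1 h2 M).
have [z [fcz hzK]] := uf_ne Hp (uf_and Hp hp (p_indices_above K)).
have [b [[_ hb] Ecz]] := FP_blocks h3 fcz.
have Ecz' : word c ++ word z = map pos (flatten (map a b)).
  rewrite -Ecz /fg_mul /fg_of /word /= reduce_cat_disjoint ?(proj2_sig c) ?(proj2_sig z) //.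
  move=> u v /(map_f fst) /hcK hu /(map_f fst) /hzK hv e.
  by have := leq_ltn_trans hu hv; rewrite e ltnn.
rewrite (block_word_prefix h1 h2 h3 Ecz' hcK hzK); exists [seq n <- b | n <= M].
split=> //; split; last by apply: sorted_filter => //; exact: ltn_trans.
move=> e; apply: hc; apply: word_inj.
by rewrite (block_word_prefix h1 h2 h3 Ecz' hcK hzK) (word_blocks _ h3) e.
Qed.

Lemma left_stabilizer q : ultrafilter q -> uf_eq (uf_mul q p) p ->
  uf_eq q (principal fg_one) \/ uf_eq q p.
Proof.
move=> hq he; case: (uf_dich hq (fun x => x <> fg_one)) => h.
  right; apply: uf_eq_of_sub => //; first exact: (uf_dich Hp).
  move=> A /vsp_blocks [x [a [h1 h2 h3 h4 h5]]].
  apply: (uf_up hq (uf_and hq (proj2 (he (FP x)) h4) h)) => c [hc1 hc2].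
  exact/h5/(FP_of_translate h1 h2 h3 hc2 hc1).
by left; apply: uf_principal_of => //; apply: (uf_up hq h) => x /NNPP.
Qed.

End VeryStronglyProductive.

Lemma split_sizes (T : Type) (c u v : seq T) : c = u ++ v ->
  v = drop (size c - size v) c /\ u = take (size c - size v) c.
Proof. by move=> ->; rewrite size_cat addnK drop_size_cat // take_size_cat. Qed.

(* Since c has finitely many suffixes, for r-almost every t the product c t
   cancels one and the same suffix v of c: c = u v and t = v^-1 t2 with
   c t = u t2 as reduced words. *)
Lemma uf_cancellation r c (B : set_ FG) : ultrafilter r -> r (ltrans c B) ->
  exists u v, word c = u ++ v /\
    r (fun t => exists t2, [/\ word t = winv v ++ t2, word (fg_mul c t) = u ++ t2 & B (fg_mul c t)]).
Proof.
move=> hr hB.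
pose Q k t := exists u v t2, [/\ word c = u ++ v, size v = k,
  word t = winv v ++ t2, word (fg_mul c t) = u ++ t2 & B (fg_mul c t)].
have hQ : forall t, ltrans c B t -> exists k, k <= size (word c) /\ Q k t.
  move=> t ht; have [u [v [t2 [E1 E2 E3]]]] := reduced_product_split (proj2_sig c) (proj2_sig t).
  exists (size v); split; first by rewrite /word E1 size_cat leq_addl.
  by exists u, v, t2.
have [k [_ hk]] := uf_fin hr hB hQ.
exists (take (size (word c) - k) (word c)), (drop (size (word c) - k) (word c)).
split; first by rewrite cat_take_drop.
apply: (uf_up hr hk) => t [u [v [t2 [E1 <- E3 E4 E5]]]].
by have [<- <-] := split_sizes E1; exists t2.
Qed.

Definition tail_set (h g : seq letter) (a : nat -> seq nat) (t : FG) : Prop :=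
  exists t2, word t = h ++ t2 /\
    exists bs, fin_index bs /\ g ++ t2 = map pos (flatten (map a bs)).

Lemma tail_set_indices h g a t : tail_set h g a t ->
  exists bs, fin_index bs /\ forall j, sumn (map fst h) + sumn (map fst g) < j ->
    (j \in idx t) = (j \in flatten (map a bs)).
Proof.
move=> [t2 [Et [bs [hb Eb]]]]; exists bs; split => // j hj.
have notin s : sumn s < j -> j \in s = false.
  by move=> hs; apply/negP => /leq_sumn_mem hjs; have := leq_ltn_trans hjs hs; rewrite ltnn.
have Eb' : map fst g ++ map fst t2 = flatten (map a bs) by rewrite -map_cat Eb map_fst_pos.
rewrite /idx Et -Eb' !map_cat !mem_cat notin ?(notin (map fst g)) //.
  exact: leq_ltn_trans (leq_addl _ _) hj.
exact: leq_ltn_trans (leq_addr _ _) hj.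
Qed.

Section RightFactor.
Variables p q r : set_ FG -> Prop.
Hypothesis Hp : ultrafilter p.
Hypothesis Hv : very_strongly_productive p.
Hypothesis Hq : ultrafilter q.
Hypothesis Hr : ultrafilter r.
Hypothesis He : uf_eq (uf_mul q r) p.

Lemma right_factor_tails B K : p B -> exists x a h g,
  [/\ (forall n, fin_index (a n)), (forall n, last 0 (a n) < head 0 (a n.+1)),
      (forall n, x n = seq_prod gen (a n)),
      (forall bs, fin_index bs ->
         B (seq_prod x bs) /\ forall i, i \in flatten (map a bs) -> K < i)
    & r (tail_set h g a)].
Proof.
move=> hB.
have /(vsp_blocks Hv) [x [a [h1 h2 h3 h4 h5]]] := uf_and Hp hB (p_indices_above Hp Hv K).
have [c hc] := uf_ne Hq (proj2 (He (FP x)) h4).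
have [u [v [_ hr]]] := uf_cancellation Hr hc.
exists x, a, (winv v), u; split => //.
  move=> bs hbs; have [hB1 hB2] := h5 _ (ex_intro _ bs (conj hbs erefl)).
  by split => // i hi; apply: hB2; rewrite /idx (word_blocks _ h3) map_fst_pos.
apply: (uf_up Hr hr) => t [t2 [Et Ect /(FP_blocks h3) [bs [hbs Ebs]]]].
by exists t2; split => //; exists bs; rewrite -Ect.
Qed.

Definition r_index (i : nat) : Prop := r (fun t => i \in idx t).

Lemma r_agrees_below K : r (fun t => forall i, i <= K -> (i \in idx t <-> r_index i)).
Proof.
have bit i : r (fun t => i \in idx t <-> r_index i).
  case: (uf_dich Hr (fun t => i \in idx t)) => h; apply: (uf_up Hr h) => t ht //.
  by split => // hc; case: (uf_notboth Hr hc h).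
elim: K => [|K IH]; first by apply: (uf_up Hr (bit 0)) => t ht i; rewrite leqn0 => /eqP->.
apply: (uf_up Hr (uf_and Hr IH (bit K.+1))) => t [h1 h2] i.
by rewrite leq_eqVlt => /orP[/eqP->|] //; rewrite ltnS; exact: h1.
Qed.

(* r has finitely many indices: otherwise, on the window of a suitable
   block, r-almost all tails would make that block an interval trace of
   r_index, for every block system of p, contradicting p_no_interval_trace. *)
Lemma r_index_bounded : exists K, forall i, r_index i -> i <= K.
Proof.
apply: NNPP => hub.
have hB : p (fun z => ~ interval_trace r_index z) := uf_not Hp (@p_no_interval_trace p Hv r_index).
have [x [a [h [g [h1 h2 h3 hbs hS]]]]] := right_factor_tails 0 hB.
set N0 := sumn (map fst h) + sumn (map fst g).
have hN0 := bl_last_ge h1 h2 N0.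
have [i0 [hi0 Ci0]] : exists i0, last 0 (a N0) < i0 /\ r_index i0.
  apply: NNPP => hn; apply: hub; exists (last 0 (a N0)) => i Ci.
  by rewrite leqNgt; apply/negP => hi; apply: hn; exists i.
have [t1 [S1 F1]] := uf_ne Hr (uf_and Hr hS (r_agrees_below i0)).
have [bs1 [_ I1]] := tail_set_indices S1.
have : i0 \in flatten (map a bs1).
  by rewrite -I1; [exact/(F1 i0) | exact: leq_ltn_trans hN0 hi0].
case/flatten_mapP => n _ hi0n; case/andP: (bl_bounds h1 hi0n) => _ hi0l.
have hNn : N0 < n.
  rewrite ltnNge; apply/negP => /(bl_last_mono h1 h2) hle.
  by have := leq_trans hi0l hle; rewrite leqNgt hi0.
have [t2 [S2 F2]] := uf_ne Hr (uf_and Hr hS (r_agrees_below (last 0 (a n)))).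
have [bs2 [_ I2]] := tail_set_indices S2.
have window i : head 0 (a n) <= i <= last 0 (a n) ->
    (r_index i <-> (n \in bs2) && (i \in a n)).
  move=> hw; case/andP: (hw) => hl hr; rewrite -(bl_window h1 h2 _ hw) -I2.
    exact: iff_sym (F2 i hr).
  exact: leq_ltn_trans hN0 (leq_trans (bl_lt h1 h2 hNn) hl).
have hn2 : n \in bs2 by case/andP: (proj1 (window i0 (bl_bounds h1 hi0n)) Ci0).
have hfi : fin_index [:: n] by split.
apply: (proj1 (hbs _ hfi)).
exists (a n); split; first by rewrite (word_blocks _ h3) /= cats0.
by move=> i hl hr; rewrite window ?hl ?hr // hn2.
Qed.

Hypothesis Hnp : nonprincipal r.
Hypothesis HI : r increasing_positive.

Section BoundedIndices.
Variable K1 : nat.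
Hypothesis HK1 : forall i, r_index i -> i <= K1.

Lemma tail_head_shape a h g :
  (forall bs, fin_index bs -> forall i, i \in flatten (map a bs) -> K1 < i) ->
  r (tail_set h g a) ->
  [/\ all snd h, sorted ltn (map fst h) & forall i, i \in map fst h <-> r_index i].
Proof.
move=> hb hS; set K3 := K1 + sumn (map fst h).
have [t [[[t2 [Et [bs [hbs Eb]]]] [Ha Hs]] F]] :=
  uf_ne Hr (uf_and Hr (uf_and Hr hS HI) (r_agrees_below K3)).
have Eidx : idx t = map fst h ++ map fst t2 by rewrite /idx Et map_cat.
rewrite Eidx in Hs F; rewrite Et all_cat in Ha.
have Eb' : map fst g ++ map fst t2 = flatten (map a bs) by rewrite -map_cat Eb map_fst_pos.
split; [by case/andP: Ha | exact: (cat_sorted2 Hs).1 | move=> i; split => hi].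
  apply/(F i); first exact: leq_trans (leq_sumn_mem hi) (leq_addl _ _).
  by rewrite mem_cat hi.
have hiK := HK1 hi.
move: (proj2 (F i (leq_trans hiK (leq_addr _ _))) hi); rewrite mem_cat => /orP[] // hi2.
have : i \in flatten (map a bs) by rewrite -Eb' mem_cat hi2 orbT.
by move/(hb _ hbs); rewrite ltnNge hiK.
Qed.

Lemma tail_translate x a h g (w : FG) :
  (forall n, fin_index (a n)) -> (forall n, last 0 (a n) < head 0 (a n.+1)) ->
  (forall n, x n = seq_prod gen (a n)) ->
  (forall bs, fin_index bs -> forall i, i \in flatten (map a bs) -> K1 < i) ->
  word w = h -> forall t, tail_set h g a t ->
  (forall i, i <= last 0 (a (K1 + sumn (map fst g))) -> (i \in idx t <-> r_index i)) ->
  t <> w -> exists b, fin_index b /\ t = fg_mul w (seq_prod x b).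
Proof.
move=> h1 h2 h3 hb Ew t [t2 [Et [bs [hbs Eb]]]] F hne.
set N := K1 + sumn (map fst g); set K3 := last 0 (a N).
have hpos2 : all snd t2.
  by have := all_snd_pos (flatten (map a bs)); rewrite -Eb all_cat => /andP[].
have Eb' : map fst g ++ map fst t2 = flatten (map a bs) by rewrite -map_cat Eb map_fst_pos.
have hg : forall i, i \in map fst g -> i <= K3.
  move=> i /leq_sumn_mem hi; apply: leq_trans (bl_last_ge h1 h2 N).
  exact: leq_trans hi (leq_addl _ _).
have ht2 : forall i, i \in map fst t2 -> K3 < i.
  move=> i hi; have hK : K1 < i by apply: (hb _ hbs); rewrite -Eb' mem_cat hi orbT.
  have hit : i \in idx t by rewrite /idx Et map_cat mem_cat hi orbT.
  rewrite ltnNge; apply/negP => /F hiF.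
  by have := HK1 (proj1 hiF hit); rewrite leqNgt hK.
have [_ Et2] := bl_split h1 h2 Eb' hg ht2.
set b := [seq n <- bs | N < n] in Et2.
have Et2' : t2 = map pos (flatten (map a b)) by rewrite (positive_word hpos2) Et2.
exists b; split; last first.
  apply: word_inj; rewrite /fg_mul /fg_of /word /= -/(word (seq_prod x b)).
  by rewrite (word_blocks _ h3) -Et2' -/(word w) Ew -Et reduce_id //; exact: (proj2_sig t).
split; last by apply: sorted_filter; [exact: ltn_trans | case: hbs].
move=> e; apply: hne; apply: word_inj.
by rewrite Et Ew Et2' e cats0.
Qed.

(* Hence r = w p, where w is the increasing word of the indices of r. *)
Lemma bounded_right_factor : exists w, uf_eq r (uf_mul (principal w) p).
Proof.
have [? [? [h0 [? [_ _ _ hbs0 hS0]]]]] := right_factor_tails K1 (uf_T Hp).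
have [hp0 hs0 hm0] := tail_head_shape (fun bs hb => proj2 (hbs0 bs hb)) hS0.
pose w : FG := exist _ h0 (positive_isred hp0).
exists w; apply: uf_eq_of_sub => // [A|A hA]; first exact: (uf_dich Hp (ltrans w A)).
have [x [a [h [g [h1 h2 h3 hbs hS]]]]] := right_factor_tails K1 hA.
have [hp hs hm] := tail_head_shape (fun bs hb => proj2 (hbs bs hb)) hS.
have Eh : h = h0.
  rewrite (positive_word hp) (positive_word hp0); congr (map pos _).
  by apply: (irr_sorted_eq ltn_trans ltnn) => // i; apply/idP/idP => [/hm/hm0|/hm0/hm].
subst h.
pose K3 := last 0 (a (K1 + sumn (map fst g))).
apply: (uf_up Hr (uf_and Hr (uf_and Hr hS (r_agrees_below K3)) (uf_nonprinc Hr w Hnp))).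
move=> t [[St Ft] ne].
have [b [hb ->]] := tail_translate h1 h2 h3 (fun bs hb => proj2 (hbs bs hb)) (erefl : word w = h0) St Ft ne.
exact: (proj1 (hbs b hb)).
Qed.

End BoundedIndices.

Lemma right_factor_translate : exists w, uf_eq r (uf_mul (principal w) p).
Proof. by have [K1 HK1] := r_index_bounded; exact: (bounded_right_factor HK1). Qed.

End RightFactor.

Lemma uf_mul_eq_r U V V' : ultrafilter U -> uf_eq V V' -> uf_eq (uf_mul U V) (uf_mul U V').
Proof. by move=> hU hV A; apply: (uf_iff hU) => x; exact: hV. Qed.

Lemma uf_mul_eq_l U U' V : uf_eq U U' -> uf_eq (uf_mul U V) (uf_mul U' V).
Proof. by move=> hU A; exact: hU. Qed.

Lemma uf_mul_principal_mid U V c : ultrafilter U -> ultrafilter V ->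
  uf_eq (uf_mul (uf_mul U (principal c)) V) (uf_mul U (uf_mul (principal c) V)).
Proof.
move=> hU hV A; apply: (uf_iff hU) => x; apply: (uf_iff hV) => z.
by rewrite /ltrans fg_mulA.
Qed.

Lemma uf_mul_principal_ll V c d : ultrafilter V ->
  uf_eq (uf_mul (principal c) (uf_mul (principal d) V)) (uf_mul (principal (fg_mul c d)) V).
Proof. by move=> hV A; apply: (uf_iff hV) => z; rewrite /ltrans fg_mulA. Qed.

Lemma uf_mul_principal_rr U c d : ultrafilter U ->
  uf_eq (uf_mul (uf_mul U (principal c)) (principal d)) (uf_mul U (principal (fg_mul c d))).
Proof. by move=> hU A; apply: (uf_iff hU) => z; rewrite /principal /ltrans fg_mulA. Qed.

Lemma uf_mul_one_l V : ultrafilter V -> uf_eq (uf_mul (principal fg_one) V) V.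
Proof. by move=> hV A; apply: (uf_iff hV) => z; rewrite /ltrans fg_mul1g. Qed.

Lemma uf_mul_one_r U : ultrafilter U -> uf_eq (uf_mul U (principal fg_one)) U.
Proof. by move=> hU A; apply: (uf_iff hU) => z; rewrite /principal /ltrans fg_mulg1. Qed.

Section Factorization.
Variables p q r : set_ FG -> Prop.
Hypothesis Hp : ultrafilter p.
Hypothesis Hv : very_strongly_productive p.
Hypothesis Hq : ultrafilter q.
Hypothesis Hr : ultrafilter r.
Hypothesis He : uf_eq (uf_mul q r) p.

Lemma left_factor_of_principal y0 : uf_eq r (principal y0) ->
  uf_eq q (uf_mul p (principal (fg_inv y0))).
Proof.
move=> hy A; rewrite /uf_mul -He; apply: (uf_iff Hq) => x.
by rewrite hy /principal /ltrans fg_mulgK.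
Qed.

(* If r = w p then (q w) p = p, so q w is 1 or p. *)
Lemma left_factor_of_translate w : uf_eq r (uf_mul (principal w) p) ->
  uf_eq q (uf_mul p (principal (fg_inv w))) \/ uf_eq q (principal (fg_inv w)).
Proof.
move=> hw; pose q2 := uf_mul q (principal w).
have hq2 : ultrafilter q2 := uf_mul_principal_r w Hq.
have e2 : uf_eq (uf_mul q2 p) p.
  move=> A; rewrite uf_mul_principal_mid // -(He A).
  by apply: uf_mul_eq_r => // B; rewrite hw.
have back : uf_eq q (uf_mul q2 (principal (fg_inv w))).
  by move=> A; rewrite uf_mul_principal_rr // fg_mulV uf_mul_one_r.
case: (left_stabilizer Hp Hv hq2 e2) => h; [right|left] => A; rewrite back (uf_mul_eq_l _ h) //.
by rewrite /uf_mul /principal /ltrans fg_mul1g.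
Qed.

(* A nonprincipal right factor is a translate w p: after translating r by the
   part d of a suitable c in q that cancels, r contains the increasing words. *)
Lemma right_factor_nonprincipal : nonprincipal r ->
  exists w, uf_eq r (uf_mul (principal w) p).
Proof.
move=> hnp.
have [c hc] := uf_ne Hq (proj2 (He increasing_positive) (p_increasing Hp Hv)).
have [u [v [_ hr]]] := uf_cancellation Hr hc.
set d := fg_of (winv v).
pose r1 := uf_mul (principal (fg_inv d)) r.
have hr1 : ultrafilter r1 := uf_mul_principal_l (fg_inv d) Hr.
have hrr1 : uf_eq r (uf_mul (principal d) r1).
  by move=> A; rewrite uf_mul_principal_ll // fg_mulV uf_mul_one_l.
have e1 : uf_eq (uf_mul (uf_mul q (principal d)) r1) p.
  by move=> A; rewrite uf_mul_principal_mid // -(He A); apply: uf_mul_eq_r => // B; rewrite hrr1.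
have np1 : nonprincipal r1.
  by move=> t0 ht0; apply: (hnp (fg_mul d t0)) => A; rewrite hrr1; exact: ht0.
have hI1 : r1 increasing_positive.
  apply: (uf_up Hr hr) => t [t2 [Et Ect [hpos hsort]]].
  rewrite Ect all_cat in hpos; case/andP: hpos => _ hp2.
  rewrite /idx Ect map_cat in hsort.
  pose t0 : FG := exist _ t2 (positive_isred hp2).
  have -> : t = fg_mul d t0.
    apply: word_inj; rewrite /fg_mul /fg_of /word /= reduce_catl -/(word t) -Et.
    by rewrite reduce_id //; exact: (proj2_sig t).
  by rewrite /ltrans fg_mulK; split => //; exact: (cat_sorted2 hsort).2.
have [w1 hw1] := right_factor_translate Hp Hv (uf_mul_principal_r d Hq) hr1 e1 np1 hI1.
exists (fg_mul d w1) => A; rewrite hrr1 -uf_mul_principal_ll //.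
exact: hw1.
Qed.

End Factorization.


Theorem mainTheorem18 (p q r : set_ FG -> Prop) :
  ultrafilter p -> p inS -> very_strongly_productive p ->
  ultrafilter q -> ultrafilter r ->
  uf_eq (uf_mul q r) p ->
  (exists w : FG,
     (uf_eq r (uf_mul (principal w) p) /\
      uf_eq q (uf_mul p (principal (fg_inv w))))
  \/ (uf_eq r (principal w) /\
      uf_eq q (uf_mul p (principal (fg_inv w))))
  \/ (uf_eq r (uf_mul (principal w) p) /\
      uf_eq q (principal (fg_inv w))))
  /\
  (nonprincipal q -> nonprincipal r ->
   exists w : FG,
     uf_eq r (uf_mul (principal w) p) /\
     uf_eq q (uf_mul p (principal (fg_inv w)))).
Proof.
move=> Hp _ Hv Hq Hr He.
have factor_r := right_factor_nonprincipal Hp Hv Hq Hr He.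
have factor_q := left_factor_of_translate Hp Hv Hq He.
split.
  case: (classic (nonprincipal r)) => [/factor_r [w hw]|/not_nonprincipal [y0 hy0]].
    by exists w; case: (factor_q w hw) => h; [left | right; right].
  by exists y0; right; left; split; last exact: (left_factor_of_principal Hq He hy0).
move=> nq /factor_r [w hw]; exists w; split => //.
by case: (factor_q w hw) => // h; case: (nq (fg_inv w)).
Qed.
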